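(* Assume the standing setting below and run the DMFW algorithm with $\gamma_k=\frac{2}{k+1}$ and $\eta_k=\frac{2}{k+2}$. Then for every $i\in\mathcal N$ and $k\ge1$, $$\mathbb E\|y_k^i\|\le\psi.$$
   Context: Setting. There are $n$ agents $\mathcal N=\{1,\dots,n\}$ connected by a connected graph $\mathcal G=(\mathcal N,\mathcal E)$ with weight matrix $C=[c_{ij}]\in\mathbb R^{n\times n}$, where $c_{ij}\ge 0$ and $c_{ij}=0$ whenever $j\ne i$ and $(i,j)\notin\mathcal E$. $C$ is doubly stochastic, i.e. all row sums and all column sums equal $1$. Let $\lambda$ be the second largest eigenvalue of $C$ in magnitude. It is assumed that $|\lambda|<1$ and that for all vectors $x^1,\dots,x^n\in\mathbb R^p$, with $\bar x=\frac1n\sum_i x^i$ and $\hat x^i=\sum_j c_{ij}x^j$, one has $\big(\sum_i\|\hat x^i-\bar x\|^2\big)^{1/2}\le|\lambda|\big(\sum_i\|x^i-\bar x\|^2\big)^{1/2}$. Let $k_0$ be the smallest positive integer with $|\lambda|\le (k_0/(k_0+1))^2$. Problem data. $\mathcal X\subset\mathbb R^p$ is convex and compact with diameter $D$, i.e. $\|x-x'\|\le D$ for all $x,x'\in\mathcal X$. For each $i$, $\xi^i$ is a random variable. The function $f_i(\cdot,\xi)$ is differentiable with $L$-Lipschitz gradient for every $\xi$. $F_i(x)=\mathbb E[f_i(x,\xi^i)]$ is differentiable with $\nabla F_i(x)=\mathbb E[\nabla f_i(x,\xi^i)]$ and $L$-Lipschitz gradient. For all $x\in\mathcal X$ and $i$,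 $\mathbb E\|\nabla F_i(x)-\nabla f_i(x,\xi^i)\|^2\le\delta^2$. Set $F=\frac1n\sum_{i=1}^nF_i$. $G>0$ is a constant with $\mathbb E\|\nabla f_i(x,\xi^i)\|^2\le G^2$ and $\mathbb E\|\nabla f_i(x,\xi^i)\|\le G$ for all $x\in\mathcal X$ and $i\in\mathcal N$. DMFW algorithm. Fix step sizes $\gamma_k,\eta_k\in(0,1]$ and deterministic initial points $x_1^i\in\mathcal X$. The samples $\xi_k^i$ ($k\ge1$, $i\in\mathcal N$) are mutually independent, and $\xi_k^i$ has the distribution of $\xi^i$. For $k=1,2,\dots$ and each $i$: - $\hat x_k^i=\sum_{j=1}^n c_{ij}x_k^j$. - For $k=1$: $y_1^i=s_1^i=\nabla f_i(\hat x_1^i,\xi_1^i)$. For $k\ge2$: $y_k^i=(1-\gamma_k)y_{k-1}^i+\nabla f_i(\hat x_k^i,\xi_k^i)-(1-\gamma_k)\nabla f_i(\hat x_{k-1}^i,\xi_k^i)$ and $s_k^i=\sum_j c_{ij}s_{k-1}^j+y_k^i-y_{k-1}^i$. - $p_k^i=\sum_j c_{ij}s_k^j$. - $\theta_k^i\in\arg\min_{\phi\in\mathcal X}\langle p_k^i,\phi\rangle$. - $x_{k+1}^i=\hat x_k^i+\eta_k(\theta_k^i-\hat x_k^i)$. Constants: - $C_1=k_0\sqrt n D$. - $\psi=\max\{\max_i\mathbb E\|y_1^i\|,\ 2G+2L(D+2C_1)\}$. *)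

From HB Require Import structures.
From mathcomp Require Import all_boot all_order all_algebra.
From mathcomp Require Import all_classical all_reals all_analysis.
From mathcomp Require Import complex.

Set Implicit Arguments.
Unset Strict Implicit.
Unset Printing Implicit Defensive.

Import Order.TTheory GRing.Theory Num.Theory.
Import numFieldNormedType.Exports.
Local Open Scope classical_set_scope.
Local Open Scope ring_scope.

Section DMFWDefs.
Variable R : realType.
Local Notation RC := (complex.complex (R : rcfType)).

Definition dot (p : nat) (u v : 'rV[R]_p) : R := \sum_(j < p) u 0 j * v 0 j.
Definition enorm (p : nat) (v : 'rV[R]_p) : R := Num.sqrt (dot v v).

Definition has_grad (p : nat) (h : 'rV[R]_p -> R^o) (x v : 'rV[R]_p) : Prop :=
  differentiable h x /\ forall u, 'd h x u = dot v u.

Definition cmod (z : RC) : R :=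
  Num.sqrt (complex.Re z ^+ 2 + complex.Im z ^+ 2).

(* [slam] is |lambda|, the modulus of the second largest (in magnitude)
   eigenvalue of C, eigenvalues counted with algebraic multiplicity and
   computed over the complex numbers. *)
Definition second_eig_modulus (n : nat) (C : 'M[R]_n) (slam : R) : Prop :=
  exists rs : seq RC,
    char_poly (map_mx (fun x : R => (complex.Complex x 0 : RC)) C)
      = \prod_(r <- rs) ('X - r%:P) /\
    slam = nth 0 (sort (fun a b : R => b <= a) (map cmod rs)) 1.

Definition vec_meas (p : nat) d (T : measurableType d) (h : T -> 'rV[R]_p) :=
  forall j : 'I_p, measurable_fun setT (fun t => h t 0 j).

Definition borel_vmap (p : nat) (phi : 'rV[R]_p -> 'rV[R]_p) : Prop :=
  forall d (T : measurableType d) (h : T -> 'rV[R]_p),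
    vec_meas h -> vec_meas (phi \o h).

Definition mutually_independent d (Omega : measurableType d)
  (P : probability Omega R) d' (Xi : measurableType d') (I : eqType)
  (J : set I) (Y : I -> Omega -> Xi) : Prop :=
  forall s : seq I, uniq s -> (forall j, j \in s -> J j) ->
  forall A : I -> set Xi, (forall j, measurable (A j)) ->
    P (\bigcap_(j in [set` s]) (Y j @^-1` A j)) =
    (\prod_(j <- s) P (Y j @^-1` A j))%E.

Definition mix (n p : nat) (C : 'M[R]_n) (v : 'I_n -> 'rV[R]_p) : 'I_n -> 'rV[R]_p :=
  fun i => \sum_(j < n) C i j *: v j.

Section Algo.
Variables (n p : nat) (Xi : Type) (C : 'M[R]_n)
  (g : 'I_n -> 'rV[R]_p -> Xi -> 'rV[R]_p)   (* g i x xi = grad_x f_i(x, xi) *)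
  (lmo : nat -> 'I_n -> 'rV[R]_p -> 'rV[R]_p) (* theta_k^i = lmo k i p_k^i *)
  (gam eta : nat -> R) (x1 : 'I_n -> 'rV[R]_p)
  (xs : nat -> 'I_n -> Xi).

Local Notation vecs := ('I_n -> 'rV[R]_p).

(* dmfw_st m = (x_k, xhat_k, y_k, s_k) with k = m+1 *)
Fixpoint dmfw_st (m : nat) : vecs * vecs * vecs * vecs :=
  match m with
  | 0 =>
      let xh := mix C x1 in
      let y := fun i => g i (xh i) (xs 1 i) in
      (x1, xh, y, y)
  | m'.+1 =>
      let '(x, xh, y, s) := dmfw_st m' in
      let kp := m'.+1 in
      let k := m'.+2 in
      let pk := mix C s in
      let th := fun i => lmo kp i (pk i) in
      let x' := fun i => xh i + eta kp *: (th i - xh i) in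
      let xh' := mix C x' in
      let y' := fun i => (1 - gam k) *: y i + g i (xh' i) (xs k i)
                         - (1 - gam k) *: g i (xh i) (xs k i) in
      let s' := fun i => mix C s i + y' i - y i in
      (x', xh', y', s')
  end.

(* y_k^i for k >= 1 *)
Definition dmfw_y (k : nat) (i : 'I_n) : 'rV[R]_p := (dmfw_st k.-1).1.2 i.
End Algo.

End DMFWDefs.

From HB Require Import structures.
From mathcomp Require Import all_boot all_order all_algebra.
From mathcomp Require Import all_classical all_reals all_analysis.
From mathcomp Require complex.
From mathcomp Require Import measurable_realfun lra ring.

Import Order.TTheory GRing.Theory Num.Theory.
Import numFieldNormedType.Exports.
Local Open Scope classical_set_scope.
Local Open Scope ring_scope.

Set Implicit Arguments.
Unset Strict Implicit.
Unset Printing Implicit Defensive.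

(* Write [y_k], [xhat_k] for the iterates at one agent and [b = gamma_(k+1)].
   The recursion gives [y_(k+1) = (1 - b) y_k + (g(xhat_(k+1)) - g(xhat_k)) + b g(xhat_k)],
   with [g] the sampled gradient. Every [xhat_k] is within [D] of each point of [X] and
   [C1 / k] of the network average because mixing contracts the disagreement by
   [|lambda| <= (k0 / (k0 + 1))^2] while the Frank-Wolfe step [eta_k = 2 / (k + 2)]
   adds at most [eta_k sqrt n D] to it; the averages move by at most [eta_k D]. By
   [L]-smoothness this yields, for any [c] in [X],
     [|y_(k+1)| <= (1 - b) |y_k| + L |xhat_(k+1) - xhat_k| + b (|g(c)| + L D)],
   and since [|xhat_(k+1) - xhat_k| = O(1/k)] the deterministic part is at most
   [b (2 G + 2 L (D + 2 C1)) - b G]. Taking expectations, [E |g(c)| <= G] gives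
   [E |y_(k+1)| <= (1 - b) E |y_k| + b psi], whence [E |y_k| <= psi] by induction. *)

Section EuclideanNorm.
Variable R : realType.

Lemma cauchy_schwarz (T : finType) (a b : T -> R) :
  (\sum_t a t * b t) ^+ 2 <= (\sum_t a t ^+ 2) * (\sum_t b t ^+ 2).
Proof.
have : 0 <= \sum_i \sum_j (a i * b j - a j * b i) ^+ 2.
  by apply: sumr_ge0 => i _; apply: sumr_ge0 => j _; exact: sqr_ge0.
(* Lagrange's identity *)
have -> : \sum_i \sum_j (a i * b j - a j * b i) ^+ 2 =
  2 * ((\sum_t a t ^+ 2) * (\sum_t b t ^+ 2) - (\sum_t a t * b t) ^+ 2).
  rewrite (eq_bigr (fun i => a i ^+ 2 * (\sum_j b j ^+ 2) + b i ^+ 2 * (\sum_j a j ^+ 2)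
     - 2 * ((a i * b i) * \sum_j (a j * b j)))); last first.
    move=> i _; rewrite !mulr_sumr -big_split -sumrB /=.
    by apply: eq_bigr => j _; ring.
  rewrite sumrB big_split /= -!mulr_suml -mulr_sumr -mulr_suml.
  by rewrite (mulrC (\sum_i b i ^+ 2)); ring.
by rewrite pmulr_rge0 // subr_ge0.
Qed.

Lemma minkowski_sum (T : finType) (a b : T -> R) :
  Num.sqrt (\sum_t (a t + b t) ^+ 2) <=
  Num.sqrt (\sum_t a t ^+ 2) + Num.sqrt (\sum_t b t ^+ 2).
Proof.
set A := \sum_t a t ^+ 2; set B := \sum_t b t ^+ 2.
have A0 : 0 <= A by apply: sumr_ge0 => t _; exact: sqr_ge0.
have B0 : 0 <= B by apply: sumr_ge0 => t _; exact: sqr_ge0.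
rewrite -(ger0_norm (addr_ge0 (sqrtr_ge0 A) (sqrtr_ge0 B))) -sqrtr_sqr.
rewrite ler_sqrt ?sqr_ge0 //.
have -> : \sum_t (a t + b t) ^+ 2 = A + B + 2 * \sum_t a t * b t.
  rewrite /A /B -big_split mulr_sumr -big_split /=; apply: eq_bigr => t _; ring.
have -> : (Num.sqrt A + Num.sqrt B) ^+ 2 = A + B + 2 * (Num.sqrt A * Num.sqrt B).
  by rewrite sqrrD !sqr_sqrtr //; ring.
rewrite lerD2l ler_pM2l // -sqrtrM // (le_trans (ler_norm _)) //.
by rewrite -sqrtr_sqr ler_wsqrtr // cauchy_schwarz.
Qed.

Lemma ler_sqrt_sum (T : finType) (a b : T -> R) :
  (forall t, 0 <= a t) -> (forall t, a t <= b t) ->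
  Num.sqrt (\sum_t a t ^+ 2) <= Num.sqrt (\sum_t b t ^+ 2).
Proof.
move=> a0 ab; rewrite ler_wsqrtr //; apply: ler_sum => t _.
by rewrite ler_sqr // ?nnegrE ?(le_trans (a0 t)).
Qed.

Lemma sqrt_sum_scale (T : finType) (c : R) (a : T -> R) : 0 <= c ->
  Num.sqrt (\sum_t (c * a t) ^+ 2) = c * Num.sqrt (\sum_t a t ^+ 2).
Proof.
move=> c0; under eq_bigr do rewrite exprMn.
by rewrite -mulr_sumr sqrtrM ?sqr_ge0 // sqrtr_sqr ger0_norm.
Qed.

Lemma enormE p (v : 'rV[R]_p) : enorm v = Num.sqrt (\sum_j v 0 j ^+ 2).
Proof. by rewrite /enorm /dot; under eq_bigr do rewrite -expr2. Qed.

Lemma enorm_ge0 p (v : 'rV[R]_p) : 0 <= enorm v.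
Proof. exact: sqrtr_ge0. Qed.

Lemma enorm_rV0 (v : 'rV[R]_0) : enorm v = 0.
Proof. by rewrite enormE big_ord0 sqrtr0. Qed.

Lemma enormD p (u v : 'rV[R]_p) : enorm (u + v) <= enorm u + enorm v.
Proof. by rewrite !enormE; under eq_bigr do rewrite mxE; exact: minkowski_sum. Qed.

Lemma enormZ p (c : R) (v : 'rV[R]_p) : enorm (c *: v) = `|c| * enorm v.
Proof.
rewrite !enormE; under eq_bigr do rewrite mxE exprMn.
by rewrite -mulr_sumr sqrtrM ?sqr_ge0 // sqrtr_sqr.
Qed.

Lemma enorm_distC p (u v : 'rV[R]_p) : enorm (u - v) = enorm (v - u).
Proof. by rewrite -opprB -scaleN1r enormZ normrN normr1 mul1r. Qed.

Lemma ler_enorm_distD p (u v w : 'rV[R]_p) :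
  enorm (u - w) <= enorm (u - v) + enorm (v - w).
Proof. by rewrite (_ : u - w = (u - v) + (v - w)) ?enormD // addrA subrK. Qed.

Lemma ler_enorm_sum p (I : finType) (P : pred I) (v : I -> 'rV[R]_p) :
  enorm (\sum_(i | P i) v i) <= \sum_(i | P i) enorm (v i).
Proof.
apply: (big_ind2 (fun x y => enorm x <= y)) => //.
- by rewrite enormE big1 ?sqrtr0 // => j _; rewrite mxE expr0n.
- by move=> x1 x2 y1 y2 h1 h2; apply: (le_trans (enormD x1 y1)); exact: lerD.
Qed.

Lemma lipschitz_const_ge0 p (h : 'rV[R]_p -> 'rV[R]_p) (L : R) : (0 < p)%N ->
  (forall x y, enorm (h x - h y) <= L * enorm (x - y)) -> 0 <= L.
Proof.
move=> p_gt0 h_lip; pose u : 'rV[R]_p := const_mx 1.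
have u_gt0 : 0 < enorm u.
  rewrite enormE sqrtr_gt0; under eq_bigr do rewrite mxE expr1n.
  by rewrite sumr_const card_ord ltr0n.
have := le_trans (enorm_ge0 _) (h_lip u 0).
by rewrite subr0 pmulr_lge0.
Qed.

End EuclideanNorm.

Section Consensus.
Variables (R : realType) (n p : nat).
Hypothesis n_gt0 : (0 < n)%N.
Local Notation vecs := ('I_n -> 'rV[R]_p).

Definition mean (v : vecs) : 'rV[R]_p := n%:R^-1 *: \sum_(i < n) v i.
Definition dev (v : vecs) : R := Num.sqrt (\sum_(i < n) enorm (v i - mean v) ^+ 2).

Lemma dev_ge0 v : 0 <= dev v.
Proof. exact: sqrtr_ge0. Qed.

Lemma meanD (u v : vecs) : mean (fun i => u i + v i) = mean u + mean v.
Proof. by rewrite /mean big_split scalerDr. Qed.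

Lemma meanZ c (u : vecs) : mean (fun i => c *: u i) = c *: mean u.
Proof. by rewrite /mean -scaler_sumr !scalerA mulrC. Qed.

Lemma meanB (u v : vecs) : mean (fun i => u i - v i) = mean u - mean v.
Proof. by rewrite /mean sumrB scalerBr. Qed.

Lemma mean_mix (C : 'M[R]_n) (v : vecs) :
  (forall j, \sum_(i < n) C i j = 1) -> mean (mix C v) = mean v.
Proof.
move=> Ccol; rewrite /mean /mix exchange_big /=; congr (_ *: _).
by apply: eq_bigr => j _; rewrite -scaler_suml Ccol scale1r.
Qed.

Lemma ler_enorm_mean (v : vecs) (B : R) : (forall i, enorm (v i) <= B) ->
  enorm (mean v) <= B.
Proof.
move=> vB; have n0 : 0 < n%:R :> R by rewrite ltr0n.
rewrite /mean enormZ ger0_norm ?invr_ge0 ?ler0n // ler_pdivrMl //.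
apply: (le_trans (ler_enorm_sum _ _)).
rewrite mulr_natl -[n in B *+ n]card_ord -sumr_const.
by apply: ler_sum => i _.
Qed.

Lemma sub_mean (v : vecs) i : v i - mean v = mean (fun j => v i - v j).
Proof.
rewrite meanB; congr (_ - _); rewrite /mean sumr_const card_ord.
by rewrite -scalerMnr scalerMnl -mulr_natr mulVf ?pnatr_eq0 -?lt0n // scale1r.
Qed.

Lemma enorm_sub_mean_le_dev (v : vecs) i : enorm (v i - mean v) <= dev v.
Proof.
rewrite /dev -(ger0_norm (enorm_ge0 (v i - mean v))) -sqrtr_sqr ler_wsqrtr //.
rewrite (bigD1 i) //= lerDl; apply: sumr_ge0 => j _; exact: sqr_ge0.
Qed.

Lemma dev_le_diam (v : vecs) B : (forall i j, enorm (v i - v j) <= B) ->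
  dev v <= Num.sqrt n%:R * B.
Proof.
move=> vB; have B0 : 0 <= B.
  by apply: le_trans (vB (Ordinal n_gt0) (Ordinal n_gt0)); exact: enorm_ge0.
have -> : Num.sqrt n%:R * B = Num.sqrt (\sum_(i < n) B ^+ 2).
  by rewrite sumr_const card_ord -[B ^+ 2 *+ n]mulr_natl sqrtrM ?ler0n // sqrtr_sqr ger0_norm.
apply: ler_sqrt_sum => i; first exact: enorm_ge0.
by rewrite sub_mean; apply: ler_enorm_mean => j; exact: vB.
Qed.

Lemma dev_combine (a b : R) (u z : vecs) : 0 <= a -> 0 <= b ->
  dev (fun i => a *: u i + b *: z i) <= a * dev u + b * dev z.
Proof.
move=> a0 b0; rewrite /dev meanD !meanZ -!sqrt_sum_scale //.
apply: le_trans (minkowski_sum _ _); apply: ler_sqrt_sum => i; first exact: enorm_ge0.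
rewrite opprD addrACA -!scalerBr.
by apply: (le_trans (enormD _ _)); rewrite !enormZ !ger0_norm.
Qed.

End Consensus.

(* The iterate with index [m] is the paper's iterate [k = m + 1]. *)
Section Recurrences.
Variables (R : realType) (n p : nat) (Xi : Type) (C : 'M[R]_n)
  (g : 'I_n -> 'rV[R]_p -> Xi -> 'rV[R]_p)
  (lmo : nat -> 'I_n -> 'rV[R]_p -> 'rV[R]_p)
  (gam eta : nat -> R) (x1 : 'I_n -> 'rV[R]_p) (xs : nat -> 'I_n -> Xi).

Local Notation st := (dmfw_st C g lmo gam eta x1 xs).
Definition iter_x m := (st m).1.1.1.
Definition iter_xhat m := (st m).1.1.2.
Definition iter_y m := (st m).1.2.
Definition iter_s m := (st m).2.

Lemma iter_x0 : iter_x 0 = x1.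
Proof. by []. Qed.

Lemma iter_xhatE m : iter_xhat m = mix C (iter_x m).
Proof. by case: m => [//|m]; rewrite /iter_xhat /iter_x /=; case: (st m) => [[[? ?] ?] ?]. Qed.

Lemma iter_xS m i : iter_x m.+1 i =
  iter_xhat m i + eta m.+1 *: (lmo m.+1 i (mix C (iter_s m) i) - iter_xhat m i).
Proof. by rewrite /iter_xhat /iter_x /iter_s /=; case: (st m) => [[[? ?] ?] ?]. Qed.

Lemma iter_yS m i : iter_y m.+1 i =
  (1 - gam m.+2) *: iter_y m i + g i (iter_xhat m.+1 i) (xs m.+2 i)
  - (1 - gam m.+2) *: g i (iter_xhat m i) (xs m.+2 i).
Proof.
rewrite [iter_xhat m.+1]iter_xhatE /iter_xhat /iter_x /iter_y /=.
by case: (st m) => [[[? ?] ?] ?].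
Qed.

End Recurrences.

Definition dmfw_gamma (R : realType) (k : nat) : R := 2 / k.+1%:R.
Definition dmfw_eta (R : realType) (k : nat) : R := 2 / k.+2%:R.

Section StepSizes.
Variable R : realType.

Lemma natrS2 m : m.+2%:R = m%:R + 2 :> R. Proof. by rewrite -addn2 natrD. Qed.
Lemma natrS3 m : m.+3%:R = m%:R + 3 :> R. Proof. by rewrite -addn3 natrD. Qed.

Lemma dmfw_eta_ge0 k : 0 <= dmfw_eta R k.
Proof. by rewrite divr_ge0 ?ler0n. Qed.

Lemma dmfw_eta_le1 k : dmfw_eta R k <= 1.
Proof. by rewrite ler_pdivrMr ?ltr0Sn // mul1r ler_nat. Qed.

Lemma dmfw_gamma_ge0 k : 0 <= dmfw_gamma R k.
Proof. by rewrite divr_ge0 ?ler0n. Qed.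

Lemma dmfw_gamma_le1 k : (0 < k)%N -> dmfw_gamma R k <= 1.
Proof. by case: k => // k _; rewrite ler_pdivrMr ?ltr0Sn // mul1r ler_nat. Qed.

(* With [a = k0], [b = m] and [S = sqrt n * D], this is the induction step of
   [dev xhat_m <= k0 sqrt n D / (m + 1)]. *)
Lemma consensus_rate_step (a b S : R) : 1 <= a -> 0 <= b -> 0 <= S ->
  (a / (a + 1)) ^+ 2 * ((1 - 2 / (b + 3)) * (a * S / (b + 1)) + 2 / (b + 3) * S)
  <= a * S / (b + 2).
Proof.
move=> a1 b0 S0; rewrite -subr_ge0.
have -> : a * S / (b + 2)
    - (a / (a + 1)) ^+ 2 * ((1 - 2 / (b + 3)) * (a * S / (b + 1)) + 2 / (b + 3) * S)
  = a * S * (a * a + 2 * a + b + 3) / ((a + 1) ^+ 2 * (b + 2) * (b + 3)).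
  by field; rewrite ?mulf_neq0 ?expf_neq0 ?lt0r_neq0 //; lra.
apply: divr_ge0; first by apply: mulr_ge0; [apply: mulr_ge0; lra | nra].
by apply: mulr_ge0; [apply: mulr_ge0; [exact: sqr_ge0|lra]|lra].
Qed.

(* With [b = m], [LC1 = L * C1] and [LD = L * D]. *)
Lemma tracking_rate_step (b LC1 LD G : R) :
  0 <= b -> 0 <= LC1 -> 0 <= LD -> 0 <= G ->
  LC1 / (b + 2) + LC1 / (b + 1) + (2 / (b + 3)) * LD + (2 / (b + 3)) * (LD + G)
  <= (2 / (b + 3)) * (2 * G + 2 * LD + 4 * LC1).
Proof.
move=> b0 c0 d0 g0; rewrite -subr_ge0.
have -> : (2 / (b + 3)) * (2 * G + 2 * LD + 4 * LC1) -
    (LC1 / (b + 2) + LC1 / (b + 1) + (2 / (b + 3)) * LD + (2 / (b + 3)) * (LD + G))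
  = (2 * G * (b + 1) * (b + 2) + LC1 * (6 * b * b + 15 * b + 7))
    / ((b + 1) * (b + 2) * (b + 3)).
  by field; rewrite ?mulf_neq0 ?lt0r_neq0 //; lra.
apply: divr_ge0; last by apply: mulr_ge0; [apply: mulr_ge0|]; lra.
apply: addr_ge0; first by apply: mulr_ge0; [apply: mulr_ge0|]; lra.
by apply: mulr_ge0 => //; nra.
Qed.

End StepSizes.

Section Invariants.
Variables (R : realType) (n p : nat) (Xi : Type) (C : 'M[R]_n)
  (g : 'I_n -> 'rV[R]_p -> Xi -> 'rV[R]_p)
  (lmo : nat -> 'I_n -> 'rV[R]_p -> 'rV[R]_p)
  (x1 : 'I_n -> 'rV[R]_p) (xs : nat -> 'I_n -> Xi)
  (X : set 'rV[R]_p) (D L slam : R) (k0 : nat).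
Hypothesis n_gt0 : (0 < n)%N.
Hypothesis C_ge0 : forall i j, 0 <= C i j.
Hypothesis C_row : forall i, \sum_(j < n) C i j = 1.
Hypothesis C_col : forall j, \sum_(i < n) C i j = 1.
Hypothesis mix_contract : forall v : 'I_n -> 'rV[R]_p, dev (mix C v) <= slam * dev v.
Hypothesis k0_gt0 : (0 < k0)%N.
Hypothesis slam_le : slam <= (k0%:R / k0.+1%:R) ^+ 2.
Hypothesis X_diam : forall x y, X x -> X y -> enorm (x - y) <= D.
Hypothesis lmo_X : forall k i v, X (lmo k i v).
Hypothesis x1_X : forall i, X (x1 i).
Hypothesis L_ge0 : 0 <= L.
Hypothesis g_lip : forall i x y z, enorm (g i x z - g i y z) <= L * enorm (x - y).

Local Notation gam := (dmfw_gamma R).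
Local Notation eta := (dmfw_eta R).
Local Notation x := (iter_x C g lmo gam eta x1 xs).
Local Notation xhat := (iter_xhat C g lmo gam eta x1 xs).
Local Notation y := (iter_y C g lmo gam eta x1 xs).
Local Notation s := (iter_s C g lmo gam eta x1 xs).

Lemma D_ge0 : 0 <= D.
Proof. by apply: le_trans (X_diam (x1_X (Ordinal n_gt0)) (x1_X (Ordinal n_gt0))); exact: enorm_ge0. Qed.

Definition within_diam (v : 'rV[R]_p) := forall z, X z -> enorm (v - z) <= D.

Lemma within_diam_mix (v : 'I_n -> 'rV[R]_p) i :
  (forall j, within_diam (v j)) -> within_diam (mix C v i).
Proof.
move=> vD z Xz; rewrite /mix.
have -> : z = \sum_(j < n) C i j *: z by rewrite -scaler_suml C_row scale1r.
rewrite -sumrB; apply: (le_trans (ler_enorm_sum _ _)).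
apply: le_trans (_ : \sum_(j < n) C i j * D <= _); last by rewrite -mulr_suml C_row mul1r.
apply: ler_sum => j _; rewrite -scalerBr enormZ ger0_norm //.
by apply: ler_wpM2l => //; exact: vD.
Qed.

Lemma within_diam_convex (a b : 'rV[R]_p) (e : R) : 0 <= e <= 1 ->
  within_diam a -> X b -> within_diam (a + e *: (b - a)).
Proof.
move=> /andP[e0 e1] aD Xb z Xz.
have -> : a + e *: (b - a) - z = (1 - e) *: (a - z) + e *: (b - z).
  by apply/rowP => j; rewrite !mxE; ring.
apply: (le_trans (enormD _ _)); rewrite !enormZ !ger0_norm ?subr_ge0 //.
have := aD z Xz; have := X_diam Xb Xz; move: (enorm (a - z)) (enorm (b - z)) => u w hw hu.
nra.
Qed.

Lemma iter_x_within_diam m i : within_diam (x m i).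
Proof.
elim: m i => [|m IH] i; first by move=> z; exact: X_diam.
rewrite iter_xS iter_xhatE; apply: within_diam_convex => //.
- by rewrite dmfw_eta_ge0 dmfw_eta_le1.
- exact: within_diam_mix.
Qed.

Lemma iter_xhat_within_diam m i : within_diam (xhat m i).
Proof. by rewrite iter_xhatE; apply: within_diam_mix => j; exact: iter_x_within_diam. Qed.

Definition C1 := k0%:R * Num.sqrt n%:R * D.

Lemma C1_ge0 : 0 <= C1.
Proof. by rewrite !mulr_ge0 ?ler0n ?sqrtr_ge0 ?D_ge0. Qed.

Lemma dev_iter_xhat m : dev (xhat m) <= C1 / m.+1%:R.
Proof.
set rho : R := (k0%:R / k0.+1%:R) ^+ 2.
have rho_ge0 : 0 <= rho by exact: sqr_ge0.
have rho_le1 : rho <= 1.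
  by rewrite exprn_ile1 ?divr_ge0 ?ler0n // ler_pdivrMr ?ltr0Sn // mul1r ler_nat.
have S0 : 0 <= Num.sqrt n%:R * D by rewrite mulr_ge0 ?sqrtr_ge0 ?D_ge0.
have k0_ge1 : 1 <= k0%:R :> R by rewrite ler1n.
elim: m => [|m IH].
  rewrite iter_xhatE iter_x0 divr1; apply: (le_trans (mix_contract _)).
  have h1 : dev x1 <= Num.sqrt n%:R * D by apply: dev_le_diam => // i j; exact: X_diam.
  have h2 := dev_ge0 x1; have h3 : slam <= 1 by exact: le_trans slam_le rho_le1.
  by rewrite /C1 -mulrA; move: (dev x1) h1 h2 => t h1 h2; nra.
rewrite iter_xhatE; apply: (le_trans (mix_contract _)).
set e := eta m.+1; set th := fun i => lmo m.+1 i (mix C (s m) i).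
have e0 : 0 <= e := dmfw_eta_ge0 _ _.
have e1 : 0 <= 1 - e by rewrite subr_ge0 dmfw_eta_le1.
have -> : x m.+1 = fun i => (1 - e) *: xhat m i + e *: th i.
  by apply: funext => i; rewrite iter_xS /th /e; apply/rowP => j; rewrite !mxE; ring.
have dev_th : dev th <= Num.sqrt n%:R * D.
  by apply: dev_le_diam => // i j; apply: X_diam; exact: lmo_X.
apply: le_trans (_ : rho * ((1 - e) * (C1 / m.+1%:R) + e * (Num.sqrt n%:R * D)) <= _).
  apply: le_trans (_ : rho * dev (fun i => (1 - e) *: xhat m i + e *: th i) <= _).
    by apply: ler_wpM2r; [exact: dev_ge0 | exact: slam_le].
  apply: ler_wpM2l => //; apply: le_trans (dev_combine (xhat m) th e1 e0) _.
  by apply: lerD; apply: ler_wpM2l.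
have := consensus_rate_step k0_ge1 (ler0n R m) S0.
by rewrite /rho /e /dmfw_eta /C1 (natrS3 R m) (natrS2 R m) -(@natr1 R m) -(@natr1 R k0) -!(mulrA k0%:R).
Qed.

Definition xhat_drift m := C1 / m.+2%:R + eta m.+1 * D + C1 / m.+1%:R.

Lemma xhat_drift_ge0 m : 0 <= xhat_drift m.
Proof. by rewrite !addr_ge0 ?mulr_ge0 ?divr_ge0 ?C1_ge0 ?D_ge0 ?dmfw_eta_ge0. Qed.

(* Both iterates are close to their means, and the means move by [eta * D]. *)
Lemma enorm_xhat_step_le m i : enorm (xhat m.+1 i - xhat m i) <= xhat_drift m.
Proof.
set M' := mean (xhat m.+1); set M := mean (xhat m).
have h1 : enorm (xhat m.+1 i - M') <= C1 / m.+2%:R.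
  exact: le_trans (enorm_sub_mean_le_dev _ _) (dev_iter_xhat m.+1).
have h3 : enorm (M - xhat m i) <= C1 / m.+1%:R.
  by rewrite enorm_distC; exact: le_trans (enorm_sub_mean_le_dev _ _) (dev_iter_xhat m).
have h2 : enorm (M' - M) <= eta m.+1 * D.
  have -> : M' = mean (fun i => xhat m i
      + eta m.+1 *: (lmo m.+1 i (mix C (s m) i) - xhat m i)).
    by rewrite /M' iter_xhatE mean_mix //; congr mean; apply: funext => j; exact: iter_xS.
  rewrite meanD meanZ addrC addKr enormZ ger0_norm ?dmfw_eta_ge0 //.
  apply: ler_wpM2l; first exact: dmfw_eta_ge0.
  apply: (ler_enorm_mean n_gt0) => j; rewrite enorm_distC.
  exact: iter_xhat_within_diam.
apply: le_trans (ler_enorm_distD _ M' _) _; rewrite /xhat_drift -addrA lerD //.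
by apply: le_trans (ler_enorm_distD _ M _) _; exact: lerD.
Qed.

Lemma enorm_iter_y_step_le m i c : X c ->
  enorm (y m.+1 i) <= (1 - gam m.+2) * enorm (y m i)
    + (L * xhat_drift m + gam m.+2 * (L * D)) + gam m.+2 * enorm (g i c (xs m.+2 i)).
Proof.
move=> Xc.
have -> : y m.+1 i = (1 - gam m.+2) *: y m i
    + (g i (xhat m.+1 i) (xs m.+2 i) - g i (xhat m i) (xs m.+2 i))
    + gam m.+2 *: g i (xhat m i) (xs m.+2 i).
  by rewrite iter_yS; apply/rowP => j; rewrite !mxE; ring.
set b := gam m.+2.
have b0 : 0 <= b := dmfw_gamma_ge0 _ _.
have b1 : 0 <= 1 - b by rewrite subr_ge0 dmfw_gamma_le1.
set g1 := g i (xhat m.+1 i) (xs m.+2 i); set g0 := g i (xhat m i) (xs m.+2 i).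
have g1_g0 : enorm (g1 - g0) <= L * xhat_drift m.
  exact: le_trans (g_lip _ _ _ _) (ler_wpM2l L_ge0 (enorm_xhat_step_le m i)).
have g0_c : enorm g0 <= enorm (g i c (xs m.+2 i)) + L * D.
  rewrite -[g0](subrK (g i c (xs m.+2 i))) addrC.
  apply: le_trans (enormD _ _) (lerD (lexx _) _).
  exact: le_trans (g_lip _ _ _ _) (ler_wpM2l L_ge0 (iter_xhat_within_diam m i Xc)).
apply: le_trans (enormD _ _) _; apply: le_trans (lerD (enormD _ _) (lexx _)) _.
rewrite !enormZ !ger0_norm //.
have := ler_wpM2l b0 g0_c; lra.
Qed.

Lemma tracking_budget G m : 0 <= G ->
  L * xhat_drift m + gam m.+2 * (L * D) + gam m.+2 * G
  <= gam m.+2 * (2 * G + 2 * L * (D + 2 * C1)).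
Proof.
move=> G_ge0.
have := tracking_rate_step (ler0n R m) (mulr_ge0 L_ge0 C1_ge0) (mulr_ge0 L_ge0 D_ge0) G_ge0.
rewrite /xhat_drift /dmfw_gamma /dmfw_eta (natrS3 R m) (natrS2 R m) -(@natr1 R m).
lra.
Qed.

End Invariants.

Lemma measurable_enorm (R : realType) d (T : measurableType d) p (v : T -> 'rV[R]_p) :
  (forall j, measurable_fun setT (fun t => v t 0 j)) ->
  measurable_fun setT (fun t => enorm (v t)).
Proof.
move=> v_meas.
rewrite (_ : (fun t => enorm (v t)) = Num.sqrt \o (fun t => \sum_j v t 0 j ^+ 2)); last first.
  by apply: funext => t; rewrite enormE.
apply: measurableT_comp; first exact: continuous_measurable_fun (@sqrt_continuous R).
by apply: measurable_sum => j; exact: measurable_funX.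
Qed.

Section Expectation.
Context (R : realType) (d : measure_display) (Omega : measurableType d).
Variable P : probability Omega R.

Lemma probability_nonempty : [set: Omega] !=set0.
Proof.
apply/set0P/eqP => Omega0; have := probability_setT P.
by rewrite Omega0 measure0 => /esym/eqP; rewrite onee_eq0.
Qed.

(* The integral of a non-negative function is the supremum of the integrals of
   the simple functions below it, so no measurability is needed here. *)
Lemma ge0_le_integral_nonmeas (u h : Omega -> R) :
  (forall w, 0 <= u w) -> (forall w, u w <= h w) ->
  (\int[P]_w (u w)%:E <= \int[P]_w (h w)%:E)%E.
Proof.
move=> u0 uh; have h0 w : 0 <= h w := le_trans (u0 w) (uh w).
rewrite !ge0_integralTE => [|w|w]; rewrite ?lee_fin //.
apply: ereal_sup_le => _ [s /= su <-]; exists s => //= w.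
by apply: le_trans (su w) _; rewrite lee_fin.
Qed.

Lemma integral_eq_of_same_law dxi (Xi : measurableType dxi) (phi1 phi2 : Omega -> Xi)
    (h : Xi -> R) :
  measurable_fun setT phi1 -> measurable_fun setT phi2 ->
  (forall A, measurable A -> P (phi1 @^-1` A) = P (phi2 @^-1` A)) ->
  measurable_fun setT h -> (forall z, 0 <= h z) ->
  (\int[P]_w (h (phi1 w))%:E = \int[P]_w (h (phi2 w))%:E)%E.
Proof.
move=> m1 m2 law12 mh h0.
have mh' : measurable_fun [set: Xi] (fun z => (h z)%:E) by exact/measurable_EFinP.
have h0' : {in [set: Xi], forall z, (0 <= (h z)%:E)%E} by move=> z _; rewrite lee_fin.
have := ge0_integral_pushforward m1 P measurableT mh' h0'.
have := ge0_integral_pushforward m2 P measurableT mh' h0'.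
rewrite !preimage_setT => <- <-.
by apply: eq_measure_integral => A mA _; exact: law12.
Qed.

Lemma ge0_integral_affine (a K c : R) (u h : Omega -> R) :
  0 <= a -> 0 <= K -> 0 <= c ->
  measurable_fun setT u -> measurable_fun setT h ->
  (forall w, 0 <= u w) -> (forall w, 0 <= h w) ->
  (\int[P]_w (a * u w + K + c * h w)%:E
   = a%:E * \int[P]_w (u w)%:E + K%:E + c%:E * \int[P]_w (h w)%:E)%E.
Proof.
move=> a0 K0 c0 mu mh u0 h0.
have mZ (b : R) (f : Omega -> R) : measurable_fun setT f ->
    measurable_fun setT (fun w => (b * f w)%:E).
  by move=> mf; apply/measurable_EFinP; exact: measurable_funM.
have ge0Z (b : R) (f : Omega -> R) : 0 <= b -> (forall w, 0 <= f w) ->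
    forall w, setT w -> (0 <= (b * f w)%:E)%E.
  by move=> b0 f0 w _; rewrite lee_fin mulr_ge0.
under eq_integral do rewrite !EFinD.
rewrite ge0_integralD //; last 4 first.
- by move=> w _; rewrite -EFinD lee_fin addr_ge0 ?mulr_ge0.
- apply: emeasurable_funD; last exact: measurable_cst.
  exact: mZ.
- exact: ge0Z.
- exact: mZ.
rewrite ge0_integralD //; last 2 first.
- exact: ge0Z.
- exact: mZ.
rewrite integral_cst // [X in (_ * X)%E](_ : _ = 1%E) ?mule1; last exact: probability_setT.
congr (_ + _ + _)%E; under eq_integral do rewrite EFinM.
all: by rewrite ge0_integralZl_EFin // => [w _|]; [rewrite lee_fin | exact/measurable_EFinP].
Qed.

End Expectation.

Section ExpectationRecursion.
Context (R : realType) (d : measure_display) (Omega : measurableType d).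
Variables (P : probability Omega R) (Y h : nat -> Omega -> R) (b K : nat -> R) (G r : R).
Hypothesis b_ge0 : forall m, 0 <= b m.
Hypothesis b_le1 : forall m, b m <= 1.
Hypothesis K_ge0 : forall m, 0 <= K m.
Hypothesis h_meas : forall m, measurable_fun setT (h m).
Hypothesis h_ge0 : forall m w, 0 <= h m w.
Hypothesis h_expect : forall m, (\int[P]_w (h m w)%:E <= G%:E)%E.
Hypothesis Y0_meas : measurable_fun setT (Y 0).
Hypothesis Y_ge0 : forall m w, 0 <= Y m w.
Hypothesis Y_step : forall m w, Y m.+1 w <= (1 - b m) * Y m w + K m + b m * h m w.
Hypothesis Y0_expect : (\int[P]_w (Y 0 w)%:E <= r%:E)%E.
Hypothesis budget : forall m, K m + b m * G <= b m * r.

(* [Y] itself need not be measurable: it is dominated by the measurable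
   solution [U] of the recursion taken with equality. *)
Fixpoint dominating_seq m : Omega -> R := fun w =>
  if m is m'.+1 then (1 - b m') * dominating_seq m' w + K m' + b m' * h m' w else Y 0 w.

Local Notation U := dominating_seq.

Lemma dominating_seq_ge0 m w : 0 <= U m w.
Proof.
elim: m => [|m IH] /=; first exact: Y_ge0.
by rewrite !addr_ge0 ?mulr_ge0 ?subr_ge0.
Qed.

Lemma measurable_dominating_seq m : measurable_fun setT (U m).
Proof.
elim: m => [//|m IH] /=.
apply: measurable_funD; first apply: measurable_funD.
- exact: measurable_funM.
- exact: measurable_cst.
- exact: measurable_funM.
Qed.

Lemma le_dominating_seq m w : Y m w <= U m w.
Proof.
elim: m => [//|m IH] /=; apply: le_trans (Y_step m w) _.
by rewrite lerD2r lerD2r ler_wpM2l ?subr_ge0.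
Qed.

Lemma dominating_seq_expect_le m : (\int[P]_w (U m w)%:E <= r%:E)%E.
Proof.
elim: m => [//|m IH] /=.
rewrite ge0_integral_affine ?subr_ge0 //; last 2 first.
- exact: measurable_dominating_seq.
- exact: dominating_seq_ge0.
have U0 : (0 <= \int[P]_w (U m w)%:E)%E.
  by apply: integral_ge0 => w _; rewrite lee_fin dominating_seq_ge0.
have h0 : (0 <= \int[P]_w (h m w)%:E)%E by apply: integral_ge0 => w _; rewrite lee_fin.
move: (\int[P]_w (U m w)%:E)%E (\int[P]_w (h m w)%:E)%E U0 h0 IH (h_expect m).
move=> [u| |] [v| |] //; rewrite ?leye_eq // !lee_fin => _ _ ur vG.
have b1 : 0 <= 1 - b m by rewrite subr_ge0.
have := budget m; have := ler_wpM2l (b_ge0 m) vG; have := ler_wpM2l b1 ur.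
lra.
Qed.

Lemma expect_le_of_recursion m : (\int[P]_w (Y m w)%:E <= r%:E)%E.
Proof.
apply: le_trans (dominating_seq_expect_le m).
by apply: ge0_le_integral_nonmeas => w; [exact: Y_ge0 | exact: le_dominating_seq].
Qed.

End ExpectationRecursion.

Section Tracking.
Context (R : realType) (n p : nat) (d : measure_display) (Omega : measurableType d)
  (dxi : measure_display) (Xi : measurableType dxi).
Variables (P : probability Omega R) (C : 'M[R]_n) (X : set 'rV[R]_p)
  (D L G slam : R) (k0 : nat) (xi0 : 'I_n -> Omega -> Xi)
  (g : 'I_n -> 'rV[R]_p -> Xi -> 'rV[R]_p) (x1 : 'I_n -> 'rV[R]_p)
  (xi : nat -> 'I_n -> Omega -> Xi) (lmo : nat -> 'I_n -> 'rV[R]_p -> 'rV[R]_p).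
Hypothesis n_gt0 : (0 < n)%N.
Hypothesis C_ge0 : forall i j, 0 <= C i j.
Hypothesis C_row : forall i, \sum_(j < n) C i j = 1.
Hypothesis C_col : forall j, \sum_(i < n) C i j = 1.
Hypothesis mix_contract : forall v : 'I_n -> 'rV[R]_p, dev (mix C v) <= slam * dev v.
Hypothesis k0_gt0 : (0 < k0)%N.
Hypothesis slam_le : slam <= (k0%:R / k0.+1%:R) ^+ 2.
Hypothesis X_diam : forall x y, X x -> X y -> enorm (x - y) <= D.
Hypothesis lmo_X : forall k i v, X (lmo k i v).
Hypothesis x1_X : forall i, X (x1 i).
Hypothesis L_ge0 : 0 <= L.
Hypothesis g_lip : forall i x y z, enorm (g i x z - g i y z) <= L * enorm (x - y).
Hypothesis g_meas : forall i x j, measurable_fun setT (fun z => g i x z 0 j).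
Hypothesis G_ge0 : 0 <= G.
Hypothesis g_expect : forall i x, X x ->
  (\int[P]_w (enorm (g i x (xi0 i w)))%:E <= G%:E)%E.
Hypothesis xi0_meas : forall i, measurable_fun setT (xi0 i).
Hypothesis xi_meas : forall k i, measurable_fun setT (xi k i).
Hypothesis xi_law : forall k i A, (0 < k)%N -> measurable A ->
  P (xi k i @^-1` A) = P (xi0 i @^-1` A).

Local Notation y m i w :=
  (iter_y C g lmo (dmfw_gamma R) (dmfw_eta R) x1 (fun k j => xi k j w) m i).

Lemma expect_enorm_iter_y_le i r :
  (\int[P]_w (enorm (y 0 i w))%:E <= r%:E)%E ->
  2 * G + 2 * L * (D + 2 * C1 n D k0) <= r ->
  forall m, (\int[P]_w (enorm (y m i w))%:E <= r%:E)%E.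
Proof.
move=> y0_le budget_le m.
have g_xi_meas k x : measurable_fun setT (fun w => enorm (g i x (xi k i w))).
  by apply: measurable_enorm => j; exact: measurableT_comp (g_meas _ _ _) (xi_meas _ _).
pose b m := dmfw_gamma R m.+2.
have b_ge0 m' : 0 <= b m' := dmfw_gamma_ge0 _ _.
pose K m := L * xhat_drift n D k0 m + b m * (L * D).
pose Y m w := enorm (y m i w).
change (\int[P]_w (Y m w)%:E <= r%:E)%E.
apply: (expect_le_of_recursion (h := fun m w => enorm (g i (x1 i) (xi m.+2 i w)))
  (b := b) (K := K) (G := G)) => [m'|m'|m'|m'|m' w|m'||m' w|m' w||m'].
- exact: b_ge0.
- exact: dmfw_gamma_le1.
- by rewrite addr_ge0 ?mulr_ge0 ?(xhat_drift_ge0 k0 n_gt0 X_diam x1_X)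
    ?(D_ge0 n_gt0 X_diam x1_X).
- exact: g_xi_meas.
- exact: enorm_ge0.
- rewrite (integral_eq_of_same_law (phi2 := xi0 i) (h := fun z => enorm (g i (x1 i) z))) //.
  + exact: g_expect.
  + by move=> A mA; exact: xi_law.
  + by apply: measurable_enorm => j; exact: g_meas.
  + by move=> z; exact: enorm_ge0.
- exact: g_xi_meas.
- exact: enorm_ge0.
- exact: (enorm_iter_y_step_le _ n_gt0 C_ge0 C_row C_col mix_contract k0_gt0 slam_le
    X_diam lmo_X x1_X L_ge0 g_lip m' i (x1_X i)).
- exact: y0_le.
- have := tracking_budget k0 n_gt0 X_diam x1_X L_ge0 m' G_ge0.
  have := ler_wpM2l (b_ge0 m') budget_le.
  rewrite /K /b; lra.
Qed.

End Tracking.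

Unset Implicit Arguments.
Set Strict Implicit.

Theorem lemma8
  (R : realType) (n p : nat)
  (E : rel 'I_n) (C : 'M[R]_n) (slam : R) (k0 : nat)
  (X : set 'rV[R]_p) (D L G delta : R)
  (d : measure_display) (Omega : measurableType d) (P : probability Omega R)
  (dxi : measure_display) (Xi : measurableType dxi)
  (xi0 : 'I_n -> Omega -> Xi)                (* xi^i *)
  (f : 'I_n -> 'rV[R]_p -> Xi -> R)          (* f_i(x, xi) *)
  (g : 'I_n -> 'rV[R]_p -> Xi -> 'rV[R]_p)   (* grad_x f_i(x, xi) *)
  (x1 : 'I_n -> 'rV[R]_p)
  (xi : nat -> 'I_n -> Omega -> Xi)          (* xi_k^i *)
  (lmo : nat -> 'I_n -> 'rV[R]_p -> 'rV[R]_p) :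
  (1 < n)%N ->
  (forall i j, E i j = E j i) ->
  (forall i j, connect E i j) ->
  (forall i j, 0 <= C i j) ->
  (forall i j, j != i -> ~~ E i j -> C i j = 0) ->
  (forall i, \sum_(j < n) C i j = 1) ->
  (forall j, \sum_(i < n) C i j = 1) ->
  second_eig_modulus C slam ->
  slam < 1 ->
  (forall v : 'I_n -> 'rV[R]_p,
     let vbar := n%:R^-1 *: \sum_(i < n) v i in
     Num.sqrt (\sum_(i < n) enorm (mix C v i - vbar) ^+ 2)
       <= slam * Num.sqrt (\sum_(i < n) enorm (v i - vbar) ^+ 2)) ->
  (0 < k0)%N ->
  slam <= (k0%:R / (k0.+1)%:R) ^+ 2 ->
  (forall m : nat, (0 < m < k0)%N -> (m%:R / (m.+1)%:R) ^+ 2 < slam) ->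
  convex_set X -> compact X ->
  (forall x y, X x -> X y -> enorm (x - y) <= D) ->
  (forall i, measurable_fun setT (xi0 i)) ->
  (forall i x z, has_grad (fun y => f i y z : R^o) x (g i x z)) ->
  (forall i x y z, enorm (g i x z - g i y z) <= L * enorm (x - y)) ->
  (forall i x j, measurable_fun setT (fun z => g i x z 0 j)) ->
  (* F_i(x) = E f_i(x, xi^i), grad F_i(x) = E grad f_i(x, xi^i), L-smooth *)
  (forall i x, P.-integrable setT (fun w => (f i x (xi0 i w))%:E)) ->
  (forall i x j, P.-integrable setT (fun w => (g i x (xi0 i w) 0 j)%:E)) ->
  (let F i x := fine (\int[P]_w (f i x (xi0 i w))%:E) in
   let gradF i x := \row_(j < p) fine (\int[P]_w (g i x (xi0 i w) 0 j)%:E) in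
   (forall i x, has_grad (fun y => F i y : R^o) x (gradF i x)) /\
   (forall i x y, enorm (gradF i x - gradF i y) <= L * enorm (x - y)) /\
   (forall i x, X x ->
      (\int[P]_w ((enorm (gradF i x - g i x (xi0 i w))) ^+ 2)%:E
         <= (delta ^+ 2)%:E)%E)) ->
  0 < G ->
  (forall i x, X x ->
     (\int[P]_w ((enorm (g i x (xi0 i w))) ^+ 2)%:E <= (G ^+ 2)%:E)%E) ->
  (forall i x, X x ->
     (\int[P]_w (enorm (g i x (xi0 i w)))%:E <= G%:E)%E) ->
  (* the samples xi_k^i : independent copies of xi^i *)
  (forall k i, measurable_fun setT (xi k i)) ->
  mutually_independent P [set ki : nat * 'I_n | (0 < ki.1)%N]
    (fun ki => xi ki.1 ki.2) ->
  (forall k i A, (0 < k)%N -> measurable A ->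
     P (xi k i @^-1` A) = P (xi0 i @^-1` A)) ->
  (* linear minimization oracle: theta_k^i in argmin_{phi in X} <p_k^i, phi> *)
  (forall k i v, X (lmo k i v) /\
     forall phi, X phi -> dot v (lmo k i v) <= dot v phi) ->
  (forall k i, borel_vmap (lmo k i)) ->
  (forall i, X (x1 i)) ->
  let gam := fun k : nat => 2 / (k.+1)%:R in
  let eta := fun k : nat => 2 / (k.+2)%:R in
  let y := fun k i w => dmfw_y C g lmo gam eta x1 (fun k i => xi k i w) k i in
  let C1 := k0%:R * Num.sqrt n%:R * D in
  let psi := Order.max (\big[Order.max/-oo%E]_(i < n) (\int[P]_w (enorm (y 1%N i w))%:E))%E
                       (2 * G + 2 * L * (D + 2 * C1))%:E in
  forall (i : 'I_n) (k : nat), (0 < k)%N ->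
    (\int[P]_w (enorm (y k i w))%:E <= psi)%E.
Proof.
(* The bound is pathwise before expectations are taken. *)
move=> n_gt1 _ _ C_ge0 _ C_row C_col _ _ C_contr k0_gt0 slam_le _ _ _ X_diam xi0_meas _
  g_lip g_meas _ _ _ G_gt0 _ g_expect xi_meas _ xi_law lmo_min _ x1_X
  gam eta y C1' psi i k k_gt0.
have n_gt0 : (0 < n)%N := ltnW n_gt1.
have psi_y1 : (\int[P]_w (enorm (y 1%N i w))%:E <= psi)%E.
  by rewrite le_max (le_bigmax _ (fun j : 'I_n => \int[P]_w (enorm (y 1%N j w))%:E)%E i).
have psi_B : ((2 * G + 2 * L * (D + 2 * C1'))%:E <= psi)%E by rewrite le_max lexx orbT.
clearbody psi.
have [p0|p_gt0] := posnP p.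
  subst p; apply: le_trans psi_y1; rewrite le_eqVlt; apply/orP; left; apply/eqP.
  by congr integral; apply: funext => w; rewrite !enorm_rV0.
have [w0 _] := probability_nonempty P.
have L_ge0 : 0 <= L := lipschitz_const_ge0 p_gt0 (fun x y => g_lip i x y (xi0 i w0)).
case: psi psi_y1 psi_B => [r | | ] psi_y1 psi_B; last 2 first.
- by rewrite leey.
- by move: psi_B; rewrite leeNy_eq.
have mix_contract (v : 'I_n -> 'rV[R]_p) : dev (mix C v) <= slam * dev v.
  by rewrite /dev mean_mix //; exact: (C_contr v).
have lmo_X k' j v : X (lmo k' j v) by case: (lmo_min k' j v).
case: k k_gt0 => // m _.
exact: (expect_enorm_iter_y_le n_gt0 C_ge0 C_row C_col mix_contract k0_gt0 slam_le X_diam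
  lmo_X x1_X L_ge0 g_lip g_meas (ltW G_gt0) g_expect xi0_meas xi_meas xi_law psi_y1 psi_B).
Qed.
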